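(* Let $A_1,B_1,B_2,C_1,C_2\in\mathbb{C}^{r\times r}$ with $C_1+mI,C_2+mI$ invertible for all $m\ge0$, $A_1B_1=B_1A_1$, $B_2C_i=C_iB_2$ ($i=1,2$) and $C_1C_2=C_2C_1$. Let $n\ge1$ and suppose $A_1+mI$ is invertible for all $m\ge0$. Then $$F_{14}[A_1+nI]=F_{14}+x_1B_1\Big[\sum_{n_1=1}^nF_{14}[A_1+n_1I,B_1+I,C_1+I]\Big]C_1^{-1}+x_2\Big[\sum_{n_1=1}^nF_{14}[A_1+n_1I,B_2+I,C_2+I]\Big]B_2C_2^{-1}+x_3B_1\Big[\sum_{n_1=1}^nF_{14}[A_1+n_1I,B_1+I,C_2+I]\Big]C_2^{-1}.$$ Furthermore, if $A_1-n_1I$ is invertible for $0\le n_1\le n$, then $$F_{14}[A_1-nI]=F_{14}-x_1B_1\Big[\sum_{n_1=0}^{n-1}F_{14}[A_1-n_1I,B_1+I,C_1+I]\Big]C_1^{-1}-x_2\Big[\sum_{n_1=0}^{n-1}F_{14}[A_1-n_1I,B_2+I,C_2+I]\Big]B_2C_2^{-1}-x_3B_1\Big[\sum_{n_1=0}^{n-1}F_{14}[A_1-n_1I,B_1+I,C_2+I]\Big]C_2^{-1}.$$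
   Context: For $M\in\mathbb{C}^{r\times r}$: $(M)_0=I$, $(M)_m=M(M+I)\cdots(M+(m-1)I)$, $(M)^{-1}_m=((M)_m)^{-1}$. The three-variable Lauricella matrix function $$F_{14}=F_{14}[A_1,B_1,B_2;C_1,C_2;x_1,x_2,x_3]=\sum_{m_1,m_2,m_3\ge0}(A_1)_{m_1+m_2+m_3}(B_1)_{m_1+m_3}(B_2)_{m_2}(C_1)^{-1}_{m_1}(C_2)^{-1}_{m_2+m_3}\frac{x_1^{m_1}x_2^{m_2}x_3^{m_3}}{m_1!m_2!m_3!},$$ with scalar variables $x_i$ and matrix products in the written order; identities are of formal power series in the $x_i$. $F_{14}[\dots]$ lists only the shifted parameters, all others unchanged. *)

From mathcomp Require Import all_boot all_algebra.
From mathcomp Require Import reals complex.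
Set Implicit Arguments. Unset Strict Implicit. Unset Printing Implicit Defensive.
Import GRing.Theory.
Local Open Scope ring_scope.

Section F14.
Variables (R : realType) (r : nat).
Notation C := (R[i]).
Notation M := 'M[C]_r.

Fixpoint mpoch (A : M) (m : nat) : M :=
  if m is k.+1 then mpoch A k *m (A + (k%:R : C)%:M) else 1%:M.

(* A formal power series in x1,x2,x3 with matrix coefficients is represented
   by its coefficient function: fps m1 m2 m3 = coefficient of x1^m1 x2^m2 x3^m3. *)
Definition fps := nat -> nat -> nat -> M.

Definition F14 (A1 B1 B2 C1 C2 : M) : fps := fun m1 m2 m3 =>
  ((m1`! * m2`! * m3`!)%:R : C)^-1 *:
  (mpoch A1 (m1 + m2 + m3) *m mpoch B1 (m1 + m3) *m mpoch B2 m2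
   *m invmx (mpoch C1 m1) *m invmx (mpoch C2 (m2 + m3))).

Definition mulx1 (F : fps) : fps := fun m1 m2 m3 =>
  if m1 is k.+1 then F k m2 m3 else 0.
Definition mulx2 (F : fps) : fps := fun m1 m2 m3 =>
  if m2 is k.+1 then F m1 k m3 else 0.
Definition mulx3 (F : fps) : fps := fun m1 m2 m3 =>
  if m3 is k.+1 then F m1 m2 k else 0.

End F14.

(* Since (A+I)_N - (A)_N equals
   N (A+I)_(N-1), the coefficient of x1^m1 x2^m2 x3^m3 in F14[A+I] - F14 is
   (m1+m2+m3)/(m1! m2! m3!) times one fixed matrix (F14_core).  Splitting the
   factor m1+m2+m3 into its three summands, each piece is recognised as the
   corresponding coefficient of x1 B1 F14[A+I,B1+I,C1+I] C1^-1,
   x2 F14[A+I,B2+I,C2+I] B2 C2^-1 and x3 B1 F14[A+I,B1+I,C2+I] C2^-1; this uses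
   (A)_(k+1) = A (A+I)_k, the commutation hypotheses and the invertibility of
   C_i + mI.  The general shifts
   A1 + nI and A1 - nI follow by telescoping (F14_shift_up, F14_shift_down),
   and the theorem is obtained by moving the finite sums through the
   multiplications by x1, x2, x3. *)

From mathcomp Require Import all_boot all_algebra.
From mathcomp Require Import reals complex.
Set Implicit Arguments. Unset Strict Implicit. Unset Printing Implicit Defensive.
Import GRing.Theory Num.Theory.
Local Open Scope ring_scope.

Section MatrixFacts.
Variables (K : comUnitRingType) (r : nat).
Implicit Types (A B U X : 'M[K]_r).

Lemma comm_mx_addScalar X A c : comm_mx X A -> comm_mx X (A + c%:M).
Proof. by move=> cXA; apply: comm_mxD => //; exact: comm_mx_scalar. Qed.

Lemma invmxM A B : A \in unitmx -> B \in unitmx ->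
  invmx (A *m B) = invmx B *m invmx A.
Proof.
move=> uA uB; have uAB : A *m B \in unitmx by rewrite unitmx_mul uA uB.
apply: (can_inj (mulKmx uAB)); rewrite mulmxV //.
by rewrite -mulmxA (mulmxA B) mulmxV // mul1mx mulmxV.
Qed.

Lemma comm_mx_inv X U : U \in unitmx -> comm_mx X U -> comm_mx X (invmx U).
Proof.
move=> uU cXU; apply: (can_inj (mulKmx uU)).
by rewrite mulKVmx // mulmxA -cXU -mulmxA mulmxV // mulmx1.
Qed.
End MatrixFacts.

(* 1/p = (k+1) / ((k+1) p): trades a factorial m! for (m-1)! and a factor m. *)
Lemma inv_natr_mulS (F : numFieldType) (k p : nat) :
  (p%:R : F)^-1 = (((k.+1 * p)%N)%:R)^-1 * (k.+1)%:R.
Proof. by rewrite natrM invfM mulrC mulrA mulfV ?mul1r // pnatr_eq0. Qed.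

Section Pochhammer.
Variables (R : realType) (r : nat).
Notation C := (R[i]).
Notation M := 'M[C]_r.
Implicit Types (A X : M).

(* (A)_k is a polynomial in A, hence commutes with whatever commutes with A. *)
Lemma comm_mx_mpoch X A k : comm_mx X A -> comm_mx X (mpoch A k).
Proof.
move=> cXA; elim: k => [|k IH] /=; first exact: comm_mx1.
by apply: comm_mxM; last exact: comm_mx_addScalar.
Qed.

Lemma scalar_natS (k : nat) : ((k.+1%:R : C)%:M : M) = 1%:M + (k%:R : C)%:M.
Proof. by rewrite -natr1 raddfD addrC. Qed.

Lemma mpochSl A k : mpoch A k.+1 = A *m mpoch (A + 1%:M) k.
Proof.
elim: k => [|k IH]; first by rewrite /= mul1mx mulmx1 raddf0 addr0.
by rewrite -[mpoch A k.+2]/(mpoch A k.+1 *m _) IH /= -mulmxA -addrA -scalar_natS.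
Qed.

Lemma mpoch_shift_diff A N :
  mpoch (A + 1%:M) N - mpoch A N = (N%:R : C) *: mpoch (A + 1%:M) N.-1.
Proof.
case: N => [|k]; first by rewrite subrr scale0r.
have cA : comm_mx A (mpoch (A + 1%:M) k).
  exact/comm_mx_mpoch/comm_mx_addScalar/comm_mx_refl.
rewrite [mpoch A _]mpochSl cA /= -mulmxBr -[A + 1%:M + _]addrA [_ - A]addrC addKr.
by rewrite -scalar_natS scalar_mxC mul_scalar_mx.
Qed.

Definition shift_unit (Cm : M) := forall m : nat, Cm + (m%:R : C)%:M \in unitmx.

Lemma shift_unit_unit Cm : shift_unit Cm -> Cm \in unitmx.
Proof. by move=> /(_ 0%N); rewrite raddf0 addr0. Qed.

Lemma shift_unitS Cm : shift_unit Cm -> shift_unit (Cm + 1%:M).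
Proof. by move=> uC m; rewrite -addrA -scalar_natS. Qed.

Lemma mpoch_unit Cm k : shift_unit Cm -> mpoch Cm k \in unitmx.
Proof. by move=> uC; elim: k => [|k IH] /=; rewrite ?unitmx1 // unitmx_mul IH uC. Qed.

Lemma invmx_mpochSl Cm k : shift_unit Cm ->
  invmx (mpoch Cm k.+1) = invmx (mpoch (Cm + 1%:M) k) *m invmx Cm.
Proof.
move=> uC; rewrite mpochSl invmxM ?(shift_unit_unit uC) //.
exact: mpoch_unit (shift_unitS uC).
Qed.
End Pochhammer.

Section Contiguous.
Variables (R : realType) (r : nat).
Notation C := (R[i]).
Notation M := 'M[C]_r.
Variables (B1 B2 C1 C2 : M).
Hypotheses (hC1 : shift_unit C1) (hC2 : shift_unit C2)
  (hBC1 : comm_mx B2 C1) (hBC2 : comm_mx B2 C2) (hCC : comm_mx C1 C2).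

Definition F14_step (A : M) : fps R r := fun m1 m2 m3 =>
  mulx1 (fun a b c => B1 *m F14 A (B1 + 1%:M) B2 (C1 + 1%:M) C2 a b c *m invmx C1) m1 m2 m3
  + mulx2 (fun a b c => F14 A B1 (B2 + 1%:M) C1 (C2 + 1%:M) a b c *m B2 *m invmx C2) m1 m2 m3
  + mulx3 (fun a b c => B1 *m F14 A (B1 + 1%:M) B2 C1 (C2 + 1%:M) a b c *m invmx C2) m1 m2 m3.

(* Every term of the contiguous relation at (m1,m2,m3) is a scalar multiple of
   the same matrix: the weight 1/(m1! m2! m3!) times F14_core. *)
Definition F14_weight (m1 m2 m3 : nat) : C := ((m1`! * m2`! * m3`!)%N%:R)^-1.

Definition F14_core (A : M) (m1 m2 m3 : nat) : M :=
  mpoch (A + 1%:M) (m1 + m2 + m3).-1 *m mpoch B1 (m1 + m3) *m mpoch B2 m2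
  *m invmx (mpoch C1 m1) *m invmx (mpoch C2 (m2 + m3)).

Lemma F14_shift_diff (A : M) m1 m2 m3 :
  F14 (A + 1%:M) B1 B2 C1 C2 m1 m2 m3 - F14 A B1 B2 C1 C2 m1 m2 m3
  = (F14_weight m1 m2 m3 * (m1 + m2 + m3)%N%:R) *: F14_core A m1 m2 m3.
Proof.
by rewrite /F14 -scalerBr -!mulmxBl mpoch_shift_diff -!scalemxAl scalerA.
Qed.

Lemma step_x1 (A : M) : comm_mx B1 (A + 1%:M) -> forall m1 m2 m3,
  mulx1 (fun a b c => B1 *m F14 (A + 1%:M) (B1 + 1%:M) B2 (C1 + 1%:M) C2 a b c
                     *m invmx C1) m1 m2 m3
  = (F14_weight m1 m2 m3 * m1%:R) *: F14_core A m1 m2 m3.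
Proof.
move=> cBA [|k] m2 m3 /=; first by rewrite mulr0 scale0r.
rewrite /F14 -scalemxAr -scalemxAl /F14_weight /F14_core; congr (_ *: _).
  by rewrite (inv_natr_mulS _ k) factS !mulnA.
rewrite !addSn succnK mpochSl invmx_mpochSl //.
have cBP := comm_mx_mpoch (k + m2 + m3) cBA.
have cC1C2 : comm_mx (invmx C1) (invmx (mpoch C2 (m2 + m3))).
  apply/comm_mx_inv; first exact: mpoch_unit.
  apply/comm_mx_sym/comm_mx_inv; first exact: shift_unit_unit.
  exact/comm_mx_sym/comm_mx_mpoch.
by rewrite !mulmxA cBP -!mulmxA cC1C2.
Qed.

Lemma step_x2 (A : M) m1 m2 m3 :
  mulx2 (fun a b c => F14 (A + 1%:M) B1 (B2 + 1%:M) C1 (C2 + 1%:M) a b c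
                     *m B2 *m invmx C2) m1 m2 m3
  = (F14_weight m1 m2 m3 * m2%:R) *: F14_core A m1 m2 m3.
Proof.
case: m2 => [|k] /=; first by rewrite mulr0 scale0r.
rewrite /F14 -!scalemxAl /F14_weight /F14_core; congr (_ *: _).
  by rewrite (inv_natr_mulS _ k) factS mulnA mulnCA.
rewrite addnS addSn succnK [mpoch B2 _]mpochSl addSn invmx_mpochSl //.
have cBB : comm_mx B2 (mpoch (B2 + 1%:M) k).
  exact/comm_mx_mpoch/comm_mx_addScalar/comm_mx_refl.
have cBC1 : comm_mx B2 (invmx (mpoch C1 m1)).
  by apply/comm_mx_inv; [exact: mpoch_unit | exact: comm_mx_mpoch].
have cBC2 : comm_mx B2 (invmx (mpoch (C2 + 1%:M) (k + m3))).
  apply/comm_mx_inv; first exact/mpoch_unit/shift_unitS.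
  exact/comm_mx_mpoch/comm_mx_addScalar.
by rewrite cBB -!mulmxA (mulmxA B2) cBC1 -!mulmxA (mulmxA B2) cBC2 -!mulmxA.
Qed.

Lemma step_x3 (A : M) : comm_mx B1 (A + 1%:M) -> forall m1 m2 m3,
  mulx3 (fun a b c => B1 *m F14 (A + 1%:M) (B1 + 1%:M) B2 C1 (C2 + 1%:M) a b c
                     *m invmx C2) m1 m2 m3
  = (F14_weight m1 m2 m3 * m3%:R) *: F14_core A m1 m2 m3.
Proof.
move=> cBA m1 m2 [|k] /=; first by rewrite mulr0 scale0r.
rewrite /F14 -scalemxAr -scalemxAl /F14_weight /F14_core; congr (_ *: _).
  by rewrite (inv_natr_mulS _ k) factS mulnCA.
rewrite !addnS succnK mpochSl invmx_mpochSl //.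
by rewrite !mulmxA (comm_mx_mpoch (m1 + m2 + k) cBA).
Qed.

(* The basic contiguous relation in A1 (case n = 1): since the weight factor
   m1 + m2 + m3 splits into its three summands, the difference F14[A+I] - F14
   is exactly the correction series F14_step (A+I). *)
Lemma F14_contiguous (A : M) : comm_mx B1 A -> forall m1 m2 m3,
  F14_step (A + 1%:M) m1 m2 m3
  = F14 (A + 1%:M) B1 B2 C1 C2 m1 m2 m3 - F14 A B1 B2 C1 C2 m1 m2 m3.
Proof.
move=> cBA m1 m2 m3; have cBA1 := comm_mx_addScalar 1 cBA.
rewrite F14_shift_diff /F14_step step_x1 // step_x2 step_x3 //.
by rewrite -!scalerDl -!mulrDr -!natrD.
Qed.

Lemma F14_shift_up (A : M) : comm_mx B1 A -> forall n m1 m2 m3,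
  F14 (A + (n%:R : C)%:M) B1 B2 C1 C2 m1 m2 m3
  = F14 A B1 B2 C1 C2 m1 m2 m3
    + \sum_(1 <= i < n.+1) F14_step (A + (i%:R : C)%:M) m1 m2 m3.
Proof.
move=> cBA n m1 m2 m3.
pose f k := F14 (A + (k%:R : C)%:M) B1 B2 C1 C2 m1 m2 m3.
have telescope : \sum_(1 <= i < n.+1) F14_step (A + (i%:R : C)%:M) m1 m2 m3
                 = f n - f 0%N.
  rewrite big_add1 /=; apply: telescope_sumr_eq => // k _; rewrite /f /=.
  have -> : A + (k.+1%:R : C)%:M = A + (k%:R : C)%:M + 1%:M.
    by rewrite -addrA [_ + 1%:M]addrC scalar_natS.
  exact/F14_contiguous/comm_mx_addScalar.
by rewrite telescope /f raddf0 addr0 subrKC.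
Qed.

Lemma F14_shift_down (A : M) : comm_mx B1 A -> forall n m1 m2 m3,
  F14 (A - (n%:R : C)%:M) B1 B2 C1 C2 m1 m2 m3
  = F14 A B1 B2 C1 C2 m1 m2 m3
    - \sum_(0 <= i < n) F14_step (A - (i%:R : C)%:M) m1 m2 m3.
Proof.
move=> cBA n m1 m2 m3.
pose f k := F14 (A - (k%:R : C)%:M) B1 B2 C1 C2 m1 m2 m3.
have telescope : \sum_(0 <= i < n) F14_step (A - (i%:R : C)%:M) m1 m2 m3
                 = f 0%N - f n.
  apply: oppr_inj; rewrite opprB -sumrN.
  apply: telescope_sumr_eq => // k _; rewrite /f /= -opprB; congr (- _).
  have -> : A - (k%:R : C)%:M = A - (k.+1%:R : C)%:M + 1%:M.
    by rewrite -natr1 raddfD opprD addrA subrK.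
  apply: F14_contiguous.
  by rewrite -raddfN; exact: comm_mx_addScalar.
by rewrite telescope /f raddf0 subr0 opprB subrKC.
Qed.
End Contiguous.

Section MulxSums.
Variables (R : realType) (r : nat).
Notation M := 'M[R[i]]_r.

Lemma mulx1_sum (X Y : M) (s : seq nat) (f : nat -> fps R r) m1 m2 m3 :
  mulx1 (fun a b c => X *m (\sum_(i <- s) f i a b c) *m Y) m1 m2 m3
  = \sum_(i <- s) mulx1 (fun a b c => X *m f i a b c *m Y) m1 m2 m3.
Proof.
by case: m1 => [|k] /=; [rewrite big1 | rewrite mulmx_sumr mulmx_suml].
Qed.

Lemma mulx2_sum (X Y : M) (s : seq nat) (f : nat -> fps R r) m1 m2 m3 :
  mulx2 (fun a b c => (\sum_(i <- s) f i a b c) *m X *m Y) m1 m2 m3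
  = \sum_(i <- s) mulx2 (fun a b c => f i a b c *m X *m Y) m1 m2 m3.
Proof. by case: m2 => [|k] /=; [rewrite big1 | rewrite !mulmx_suml]. Qed.

Lemma mulx3_sum (X Y : M) (s : seq nat) (f : nat -> fps R r) m1 m2 m3 :
  mulx3 (fun a b c => X *m (\sum_(i <- s) f i a b c) *m Y) m1 m2 m3
  = \sum_(i <- s) mulx3 (fun a b c => X *m f i a b c *m Y) m1 m2 m3.
Proof.
by case: m3 => [|k] /=; [rewrite big1 | rewrite mulmx_sumr mulmx_suml].
Qed.
End MulxSums.

Theorem mainTheorem19 (R : realType) (r : nat) (A1 B1 B2 C1 C2 : 'M[R[i]]_r)
  (hC1 : forall m : nat, C1 + (m%:R : R[i])%:M \in unitmx)
  (hC2 : forall m : nat, C2 + (m%:R : R[i])%:M \in unitmx)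
  (hAB : A1 *m B1 = B1 *m A1)
  (hBC1 : B2 *m C1 = C1 *m B2)
  (hBC2 : B2 *m C2 = C2 *m B2)
  (hCC : C1 *m C2 = C2 *m C1)
  (n : nat) (hn : (1 <= n)%N)
  (hA : forall m : nat, A1 + (m%:R : R[i])%:M \in unitmx) :
  (forall m1 m2 m3 : nat,
     F14 (A1 + (n%:R : R[i])%:M) B1 B2 C1 C2 m1 m2 m3 =
     F14 A1 B1 B2 C1 C2 m1 m2 m3
     + mulx1 (fun a b c => B1 *m
         (\sum_(1 <= n1 < n.+1)
            F14 (A1 + (n1%:R : R[i])%:M) (B1 + 1%:M) B2 (C1 + 1%:M) C2 a b c)
         *m invmx C1) m1 m2 m3
     + mulx2 (fun a b c =>
         (\sum_(1 <= n1 < n.+1)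
            F14 (A1 + (n1%:R : R[i])%:M) B1 (B2 + 1%:M) C1 (C2 + 1%:M) a b c)
         *m B2 *m invmx C2) m1 m2 m3
     + mulx3 (fun a b c => B1 *m
         (\sum_(1 <= n1 < n.+1)
            F14 (A1 + (n1%:R : R[i])%:M) (B1 + 1%:M) B2 C1 (C2 + 1%:M) a b c)
         *m invmx C2) m1 m2 m3)
  /\
  ((forall n1 : nat, (n1 <= n)%N -> A1 - (n1%:R : R[i])%:M \in unitmx) ->
   forall m1 m2 m3 : nat,
     F14 (A1 - (n%:R : R[i])%:M) B1 B2 C1 C2 m1 m2 m3 =
     F14 A1 B1 B2 C1 C2 m1 m2 m3
     - mulx1 (fun a b c => B1 *m
         (\sum_(0 <= n1 < n)
            F14 (A1 - (n1%:R : R[i])%:M) (B1 + 1%:M) B2 (C1 + 1%:M) C2 a b c)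
         *m invmx C1) m1 m2 m3
     - mulx2 (fun a b c =>
         (\sum_(0 <= n1 < n)
            F14 (A1 - (n1%:R : R[i])%:M) B1 (B2 + 1%:M) C1 (C2 + 1%:M) a b c)
         *m B2 *m invmx C2) m1 m2 m3
     - mulx3 (fun a b c => B1 *m
         (\sum_(0 <= n1 < n)
            F14 (A1 - (n1%:R : R[i])%:M) (B1 + 1%:M) B2 C1 (C2 + 1%:M) a b c)
         *m invmx C2) m1 m2 m3).
Proof.
have cBA : comm_mx B1 A1 by rewrite /comm_mx hAB.
split=> [m1 m2 m3 | _ m1 m2 m3]; rewrite mulx1_sum mulx2_sum mulx3_sum.
- rewrite (F14_shift_up hC1 hC2 hBC1 hBC2 hCC cBA) !big_split /=.
  by rewrite !addrA.
- rewrite (F14_shift_down hC1 hC2 hBC1 hBC2 hCC cBA) !big_split /=.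
  by rewrite !opprD !addrA.
Qed.
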